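(* Let $\mathcal{R}$ be a commutative ring with unity, $P$ a locally finite poset in which every maximal chain has at least three elements, and $b$ an additive biderivation of $I(P,\mathcal{R})$. For $x\in P$: (1) if $x$ is a minimal element of $P$, then $b(e_{xx},e_{xx})=\sum_{x<y,\ y\text{ maximal in }P}b_{xy}(e_{xx},e_{xx})\,e_{xy}$; (2) if $x$ is a maximal element of $P$, then $b(e_{xx},e_{xx})=\sum_{y<x,\ y\text{ minimal in }P}b_{yx}(e_{xx},e_{xx})\,e_{yx}$; (3) if $x$ is neither minimal nor maximal, then $b(e_{xx},e_{xx})=0$.
   Context: $I(P,\mathcal{R})$ is the incidence algebra: functions $f:P\times P\to\mathcal{R}$ with $f(x,y)=0$ unless $x\le y$, with product $(fg)(x,y)=\sum_{x\le z\le y}f(x,z)g(z,y)$; $e_{xy}$ ($x\le y$) is the function equal to $1$ at $(x,y)$ and $0$ elsewhere. An additive biderivation is a map $b$ of two arguments, additive in each, with $b(\alpha\beta,\gamma)=\alpha b(\beta,\gamma)+b(\alpha,\gamma)\beta$ and $b(\alpha,\beta\gamma)=\beta b(\alpha,\gamma)+b(\alpha,\beta)\gamma$. Write $b_{pq}(\alpha,\beta)=b(\alpha,\beta)(p,q)$. A maximal chain is a totally ordered subset to which no element of $P$ can be added keeping it totally ordered. $x$ is minimal (maximal) if no $y$ satisfies $y<x$ ($x<y$). *)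

From HB Require Import structures.
From mathcomp Require Import all_boot all_order all_algebra.
From Stdlib Require Import ClassicalEpsilon.
Set Implicit Arguments. Unset Strict Implicit. Unset Printing Implicit Defensive.
Import Order.Theory GRing.Theory.

Section Incidence.
Context {d : Order.disp_t} (T : porderType d) (R : pzRingType).

(* Local finiteness: an enumeration of every interval [x,y]. *)
Definition interval_enum (itv : T -> T -> seq T) : Prop :=
  forall x y, uniq (itv x y) /\ (forall z, (z \in itv x y) = (x <= z <= y)%O).

Record incidence := Incidence {
  inc_fun :> T -> T -> R;
  inc_supp : forall x y, ~~ (x <= y)%O -> inc_fun x y = 0%R }.

Lemma inc_add_supp (f g : incidence) x y :
  ~~ (x <= y)%O -> (f x y + g x y = 0)%R.
Proof. by move=> h; rewrite !inc_supp // addr0. Qed.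
Definition inc_add (f g : incidence) : incidence :=
  Incidence (@inc_add_supp f g).

Lemma inc_mul_supp (itv : T -> T -> seq T) (f g : incidence) x y :
  ~~ (x <= y)%O ->
  (if (x <= y)%O then \sum_(z <- itv x y) f x z * g z y else 0)%R = 0%R.
Proof. by move=> /negbTE ->. Qed.
Definition inc_mul (itv : T -> T -> seq T) (f g : incidence) : incidence :=
  Incidence (@inc_mul_supp itv f g).

Lemma inc_e_supp (a b : T) x y :
  ~~ (x <= y)%O -> (if [&& x == a, y == b & (x <= y)%O] then 1 else 0 : R)%R = 0%R.
Proof. by move=> /negbTE ->; rewrite !andbF. Qed.
(* e_{ab} (meaningful for a <= b): 1 at (a,b), 0 elsewhere. *)
Definition inc_e (a b : T) : incidence := Incidence (@inc_e_supp a b).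

Definition biderivation (itv : T -> T -> seq T)
  (b : incidence -> incidence -> incidence) : Prop :=
  [/\ (forall a1 a2 c, b (inc_add a1 a2) c = inc_add (b a1 c) (b a2 c)),
      (forall a c1 c2, b a (inc_add c1 c2) = inc_add (b a c1) (b a c2)),
      (forall a be ga, b (inc_mul itv a be) ga =
          inc_add (inc_mul itv a (b be ga)) (inc_mul itv (b a ga) be)) &
      (forall a be ga, b a (inc_mul itv be ga) =
          inc_add (inc_mul itv be (b a ga)) (inc_mul itv (b a be) ga))].

Definition is_chain (C : T -> Prop) : Prop :=
  forall x y, C x -> C y -> (x <= y)%O \/ (y <= x)%O.
Definition maximal_chain (C : T -> Prop) : Prop :=
  is_chain C /\ forall z, ~ C z -> ~ is_chain (fun w => C w \/ w = z).
Definition chains_ge3 : Prop :=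
  forall C, maximal_chain C ->
    exists x y z, [/\ C x, C y, C z & [/\ x <> y, y <> z & x <> z]].

Definition minimal_elt (x : T) : Prop := forall y, ~ (y < x)%O.
Definition maximal_elt (x : T) : Prop := forall y, ~ (x < y)%O.

(* The (pointwise, possibly infinite) sum  Σ_{(p,q) ∈ S, p <= q} c(p,q) e_{pq}
   as a function P x P -> R; it is well defined since the e_{pq} have
   pairwise disjoint supports. *)
Definition sum_e (S : T -> T -> Prop) (c : T -> T -> R) : T -> T -> R :=
  fun p q => if excluded_middle_informative (S p q /\ (p <= q)%O)
             then c p q else 0%R.

End Incidence.

From HB Require Import structures.
From mathcomp Require Import all_boot all_order all_algebra.
From Stdlib Require Import ProofIrrelevance FunctionalExtensionality ClassicalEpsilon.
Set Implicit Arguments. Unset Strict Implicit. Unset Printing Implicit Defensive.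
Import Order.Theory GRing.Theory.
Local Open Scope ring_scope.

(* Write B = b(e_xx, e_xx).  Since e_xx = e_xx e_xx, the Leibniz rule gives
   B = e_xx B + B e_xx, so B lives on row x and column x and B(x,x) = 0.
   Expanding b(e_xx e_qr, e_xx e_rr) by the two Leibniz rules in either order
   and comparing (p,r) entries leaves B(p,q) = 0 whenever q < r; dually,
   B(p,q) = 0 whenever s < p.  So B(p,q) <> 0 forces p minimal, q maximal and
   p = x or q = x. *)

Lemma sum_if_eq_seq (T : eqType) (R : nmodType) (s : seq T) (c : T) (F : T -> R) :
  uniq s -> \sum_(z <- s) (if z == c then F z else 0) = if c \in s then F c else 0.
Proof.
move=> us; rewrite -big_mkcond -big_filter; case: ifP => cs.
  by rewrite filter_pred1_uniq // big_seq1.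
by rewrite big1_seq // => z; rewrite mem_filter => /and3P[_ /eqP -> ]; rewrite cs.
Qed.

Section IncidenceAlgebra.
Context {d : Order.disp_t} (T : porderType d) (R : pzRingType).

Lemma inc_addE (f g : incidence T R) p q : inc_add f g p q = f p q + g p q.
Proof. by []. Qed.

Lemma inc_ext (f g : incidence T R) : (forall p q, f p q = g p q) -> f = g.
Proof.
case: f g => f hf [g hg] /= efg.
have {efg} efg : f = g.
  by apply: functional_extensionality => p; apply: functional_extensionality.
by subst g; f_equal; apply: proof_irrelevance.
Qed.

Lemma eq_sum_e (S : T -> T -> Prop) (f : incidence T R) :
  (forall p q, f p q != 0 -> S p q) -> inc_fun f = sum_e S f.
Proof.
move=> fS; apply: functional_extensionality => p; apply: functional_extensionality => q.
rewrite /sum_e; case: excluded_middle_informative => // nS.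
case: (eqVneq (f p q) 0) => // /[dup] nz /fS Spq; case: nS; split => //.
by apply: contraNT nz => /inc_supp ->.
Qed.

Variables (itv : T -> T -> seq T) (hitv : interval_enum itv).

Lemma inc_mul_eL (a c : T) (f : incidence T R) p q :
  inc_mul itv (inc_e R a c) f p q = if (p == a) && (a <= c)%O then f c q else 0.
Proof.
rewrite /inc_mul /=; case: (eqVneq p a) => [->|pa] /=; last first.
  by case: ifP => // _; rewrite big1 // => z _; rewrite mul0r.
case: ifP => aq; last first.
  case: ifP => // ac; rewrite inc_supp //; apply: contraFN aq; exact: le_trans.
rewrite (eq_bigr (fun z => if z == c then (if (a <= c)%O then f z q else 0) else 0)).
  have [uniq_itv mem_itv] := hitv a q; rewrite sum_if_eq_seq // mem_itv.
  by case ac: (a <= c)%O => //=; case: ifP => // cq; rewrite inc_supp // cq.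
move=> z _; case: (eqVneq z c) => [->|_] /=; last by rewrite mul0r.
by case: ifP; rewrite ?mul1r ?mul0r.
Qed.

Lemma inc_mul_eR (a c : T) (f : incidence T R) p q :
  inc_mul itv f (inc_e R a c) p q = if (q == c) && (a <= c)%O then f p a else 0.
Proof.
rewrite /inc_mul /=; case: (eqVneq q c) => [->|qc] /=; last first.
  by case: ifP => // _; rewrite big1 // => z _; rewrite andbF mulr0.
case: ifP => pc; last first.
  case: ifP => // ac; rewrite inc_supp //; apply: contraFN pc => /le_trans; exact.
rewrite (eq_bigr (fun z => if z == a then (if (a <= c)%O then f p z else 0) else 0)).
  have [uniq_itv mem_itv] := hitv p c; rewrite sum_if_eq_seq // mem_itv.
  by case ac: (a <= c)%O; rewrite ?andbF ?andbT //; case: ifP => // pa; rewrite inc_supp // pa.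
move=> z _; case: (eqVneq z a) => [->|_] /=; last by rewrite mulr0.
by case: ifP; rewrite ?mulr1 ?mulr0.
Qed.

Lemma inc_mul_e_idem a : inc_mul itv (inc_e R a a) (inc_e R a a) = inc_e R a a.
Proof.
apply: inc_ext => p q; rewrite inc_mul_eL lexx andbT /=.
by case: (eqVneq p a) => [->|] /=; rewrite ?eqxx.
Qed.
End IncidenceAlgebra.

Section BiderivationOnIdempotent.
Context {d : Order.disp_t} (T : porderType d) (R : pzRingType)
  (itv : T -> T -> seq T) (hitv : interval_enum itv)
  (b : incidence T R -> incidence T R -> incidence T R)
  (hb : biderivation itv b) (x : T).

Local Notation e := (inc_e R x x).
Local Notation bxx := (b e e).

Lemma bxx_eq0_nonmax_col p q r : (q < r)%O -> bxx p q = 0.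
Proof.
move=> qr; have [_ _ bML bMR] := hb.
set u := inc_e R q r; set v := inc_e R r r.
have := bML e u (inc_mul itv e v).
rewrite (bMR u e v) (bMR e e v) (bMR (inc_mul itv e u) e v) (bML e u v) (bML e u e).
move=> /(congr1 (fun f => inc_fun f p r)).
rewrite !inc_addE !(inc_mul_eL hitv) !(inc_mul_eR hitv) !inc_addE.
rewrite !(inc_mul_eL hitv) !(inc_mul_eR hitv).
rewrite !eqxx !lexx (ltW qr) (lt_eqF qr) /= !addr0 andbT.
case: (p == x); last by rewrite !add0r.
by rewrite addrACA -[X in _ = _ + X]addr0 => /addrI/addrI.
Qed.

Lemma bxx_eq0_nonmin_row s p q : (s < p)%O -> bxx p q = 0.
Proof.
move=> sp; have [_ _ bML bMR] := hb.
set u := inc_e R s p; set v := inc_e R s s.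
have := bML u e (inc_mul itv v e).
rewrite (bMR e v e) (bMR u v e) (bMR (inc_mul itv u e) v e) (bML u e e) (bML u e v).
move=> /(congr1 (fun f => inc_fun f s q)).
rewrite !inc_addE !(inc_mul_eL hitv) !(inc_mul_eR hitv) !inc_addE.
rewrite !(inc_mul_eL hitv) !(inc_mul_eR hitv).
rewrite !eqxx !lexx (ltW sp) (gt_eqF sp) /= add0r andbT.
case: (q == x); last by rewrite !addr0.
by rewrite addrACA -[X in _ = X + _]add0r => /addIr/addIr.
Qed.

Lemma bxx_decomp p q :
  bxx p q = (if p == x then bxx x q else 0) + (if q == x then bxx p x else 0).
Proof.
have [_ _ bML _] := hb.
move: (bML e e e) => /(congr1 (fun f => inc_fun f p q)).
by rewrite inc_mul_e_idem // inc_addE inc_mul_eL // inc_mul_eR // lexx !andbT.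
Qed.

Lemma bxx_diag : bxx x x = 0.
Proof. by apply: (@addIr _ (bxx x x)); rewrite add0r [RHS]bxx_decomp eqxx. Qed.

Lemma bxx_neq0 p q : bxx p q != 0 ->
  [/\ minimal_elt p, maximal_elt q &
      (p = x /\ (x < q)%O) \/ (q = x /\ (p < x)%O)].
Proof.
move=> nz; split.
- by move=> s sp; rewrite (bxx_eq0_nonmin_row q sp) eqxx in nz.
- by move=> r qr; rewrite (bxx_eq0_nonmax_col p qr) eqxx in nz.
have pq : (p <= q)%O by apply: contraNT nz => /inc_supp ->.
case: (eqVneq p x) => [ep|px]; case: (eqVneq q x) => [eq|qx].
- by rewrite ep eq bxx_diag eqxx in nz.
- by left; rewrite lt_def qx -ep.
- by right; rewrite lt_def eq_sym px -eq.
- by rewrite bxx_decomp (negbTE px) (negbTE qx) addr0 eqxx in nz.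
Qed.
End BiderivationOnIdempotent.

Theorem mainTheorem11 {d : Order.disp_t} (T : porderType d) (R : comPzRingType)
  (itv : T -> T -> seq T) (hitv : interval_enum itv)
  (hch : chains_ge3 T)
  (b : incidence T R -> incidence T R -> incidence T R)
  (hb : biderivation itv b) (x : T) :
  let bxx := b (@inc_e _ T R x x) (@inc_e _ T R x x) in
  [/\ minimal_elt x ->
        inc_fun bxx = sum_e (fun p q => p = x /\ (x < q)%O /\ maximal_elt q)
                            (fun p q => inc_fun bxx p q),
      maximal_elt x ->
        inc_fun bxx = sum_e (fun p q => q = x /\ (p < x)%O /\ minimal_elt p)
                            (fun p q => inc_fun bxx p q) &
      ~ minimal_elt x -> ~ maximal_elt x ->
        inc_fun bxx = (fun _ _ => 0%R)].
Proof.
move=> bxx; have supp_bxx := bxx_neq0 hitv hb (x := x).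
split.
- move=> min_x; apply: eq_sum_e => p q /supp_bxx[_ max_q [[-> xq] | [_ px]]] //.
  by case: (min_x p).
- move=> max_x; apply: eq_sum_e => p q /supp_bxx[min_p _ [[_ xq] | [-> px]]] //.
  by case: (max_x q).
- move=> not_min not_max.
  apply: functional_extensionality => p; apply: functional_extensionality => q.
  case: (eqVneq (bxx p q) 0) => // /supp_bxx[min_p max_q [[ep _] | [eq _]]].
  + by case: not_min; rewrite -ep.
  + by case: not_max; rewrite -eq.
Qed.
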